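(* Let $(\Omega,\mathcal{F})$ be a measurable space and $\{\mathcal{F}_i:i\in I\}$ a logically independent family of sub-$\sigma$-algebras of $\mathcal{F}$, with $\mathcal{A}$ the semi-ring defined below. Let $\{A^r:r\ge1\}\subseteq\mathcal{A}$ be a sequence of nontrivial sets, each written as $A^r=\bigcap_{k=1}^{n_r}A^r_{i^r_k}$ where $i^r_1,\dots,i^r_{n_r}\in I$ are pairwise distinct and each $A^r_{i^r_k}\in\mathcal{F}_{i^r_k}$ is nontrivial. If $\bigcup_{r=1}^{\infty}A^r\in\mathcal{A}$, then for every $r\ge1$ there exist sets $B_{i^r_k}\in\mathcal{F}_{i^r_k}$, $1\le k\le n_r$, each of which is either nontrivial or equal to $\Omega$, such that \[ \bigcup_{r'=1}^{\infty}A^{r'}=\bigcap_{k=1}^{n_r}B_{i^r_k}. \]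
   Context: A set $A\in\mathcal{F}$ is nontrivial if $A\neq\emptyset$ and $A\neq\Omega$. Standing assumption: all sub-$\sigma$-algebras considered are nontrivial. The family $\{\mathcal{F}_i:i\in I\}$ is logically independent if for every finite set of distinct indices $\{i_1,\dots,i_k\}\subset I$ and every choice of nontrivial $A_{i_j}\in\mathcal{F}_{i_j}$, $\bigcap_{j=1}^kA_{i_j}\neq\emptyset$. $\mathcal{A}$ denotes the collection of all finite intersections $\bigcap_{k=1}^nA_{i_k}$ with $n\ge1$, $\{i_1,\dots,i_n\}\subseteq I$ and $A_{i_k}\in\mathcal{F}_{i_k}$. *)

From HB Require Import structures.
From mathcomp Require Import all_boot all_order all_algebra.
From mathcomp Require Import all_classical all_reals all_analysis.
Set Implicit Arguments. Unset Strict Implicit. Unset Printing Implicit Defensive.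
Local Open Scope classical_set_scope.

Definition nontrivial_set (T : Type) (A : set T) : Prop :=
  A <> set0 /\ A <> setT.

Definition sub_sigma_family (d : measure_display) (T : measurableType d)
  (I : Type) (F : I -> set (set T)) : Prop :=
  forall i, [/\ sigma_algebra setT (F i), F i `<=` measurable
              & exists A, F i A /\ nontrivial_set A].

Definition logically_independent (T : Type) (I : Type)
  (F : I -> set (set T)) : Prop :=
  forall (n : nat) (idx : 'I_n -> I) (A : 'I_n -> set T),
    injective idx ->
    (forall k, F (idx k) (A k) /\ nontrivial_set (A k)) ->
    \bigcap_(k in [set: 'I_n]) A k <> set0.

Definition calA (T : Type) (I : Type) (F : I -> set (set T)) : set (set T) :=
  fun B => exists (n : nat) (idx : 'I_n -> I) (A : 'I_n -> set T),
    [/\ (0 < n)%N, (forall k, F (idx k) (A k))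
      & B = \bigcap_(k in [set: 'I_n]) A k].

From HB Require Import structures.
From mathcomp Require Import all_boot all_order all_algebra.
From mathcomp Require Import all_classical all_reals all_analysis.
Set Implicit Arguments. Unset Strict Implicit.
Local Open Scope classical_set_scope.

(* Write the union as U = C_1 ∩ ... ∩ C_m with C_l in F_(j l). Every factor
   C_l whose index j l is not one of the indices of A^r must be Ω: otherwise
   its complement is a nontrivial set of F_(j l) that is disjoint from
   A^r ⊆ U ⊆ C_l, contradicting logical independence. Grouping the remaining
   factors by index then writes U with one factor B_k in each F_(i^r_k), and
   B_k ⊇ U ⊇ A^r ≠ ∅ rules out B_k = ∅. *)

Lemma sigma_algebra_fin_bigcap (T : pointedType) (G : set (set T))
    (J : finType) (P : set J) (C : J -> set T) :
  sigma_algebra setT G -> (forall l, P l -> G (C l)) ->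
  G (\bigcap_(l in P) C l).
Proof.
move=> /sigma_algebra_id GE GC; rewrite -GE.
by apply: (@fin_bigcap_measurable _ (g_sigma_algebraType G)) => // l /GC; rewrite -{1}GE.
Qed.

Lemma nonempty_nontrivial_or_setT (T : Type) (A : set T) :
  A !=set0 -> nontrivial_set A \/ A = setT.
Proof.
move=> A0; have [->|AT] := pselect (A = setT); [by right | left].
by split=> //; apply/eqP/set0P.
Qed.

Lemma logically_independent_bigcap_neq0 (T I : Type) (F : I -> set (set T))
    n (idx : 'I_n -> I) (A : 'I_n -> set T) :
  logically_independent F -> injective idx ->
  (forall k, F (idx k) (A k) /\ nontrivial_set (A k)) ->
  \bigcap_(k in [set: 'I_n]) A k !=set0.
Proof.
move=> F_indep idx_inj A_nt; apply/set0P/negP => /eqP.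
exact: F_indep idx_inj A_nt.
Qed.

Section logical_independence.
Variables (T : pointedType) (I : Type) (F : I -> set (set T)).
Hypothesis F_sigma : forall i, sigma_algebra setT (F i).
Hypothesis F_indep : logically_independent F.

Variables (n : nat) (idx : 'I_n -> I) (A : 'I_n -> set T).
Hypothesis idx_inj : injective idx.
Hypothesis A_nontrivial : forall k, F (idx k) (A k) /\ nontrivial_set (A k).

Let bigcapA := \bigcap_(k in [set: 'I_n]) A k.

Lemma bigcapAI_neq0 i D : (forall k, idx k <> i) ->
  F i D -> nontrivial_set D -> bigcapA `&` D !=set0.
Proof.
move=> idx_i FD D_nontriv.
pose idx' (k : 'I_(n + 1)) := if fintype.split k is inl a then idx a else i.
pose A' (k : 'I_(n + 1)) := if fintype.split k is inl a then A a else D.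
have idx'_inj : injective idx'.
  move=> k1 k2; rewrite /idx' -{2}(splitK k1) -{2}(splitK k2).
  case: (fintype.split k1) => [a|a]; case: (fintype.split k2) => [b|b] //=.
  - by move/idx_inj ->.
  - by move/idx_i.
  - by move/esym/idx_i.
  - by rewrite (ord1 a) (ord1 b).
have A'_nontrivial k : F (idx' k) (A' k) /\ nontrivial_set (A' k).
  by rewrite /idx' /A'; case: (fintype.split k).
have [x A'x] := logically_independent_bigcap_neq0 F_indep idx'_inj A'_nontrivial.
exists x; split; last by have := A'x (unsplit (inr ord0)) Logic.I; rewrite /A' unsplitK.
by move=> a _; have := A'x (unsplit (inl a)) Logic.I; rewrite /A' unsplitK.
Qed.

Lemma superset_factor_setT i C : (forall k, idx k <> i) ->
  F i C -> bigcapA `<=` C -> C = setT.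
Proof.
move=> idx_i FC AC; apply: contrapT => CT.
have [_ F_compl _] := F_sigma i.
have [x Ax] := logically_independent_bigcap_neq0 F_indep idx_inj A_nontrivial.
have compl_nontrivial : nontrivial_set (setT `\` C).
  split; first by rewrite setD_eq0 subTset.
  move=> CcT; have [_] : (setT `\` C) x by rewrite CcT.
  by apply; apply: AC.
have [y [Ay [_ notCy]]] := bigcapAI_neq0 idx_i (F_compl _ FC) compl_nontrivial.
exact/notCy/AC.
Qed.

Lemma calA_superset_factorize U : calA F U -> bigcapA `<=` U ->
  exists B : 'I_n -> set T,
    (forall k, F (idx k) (B k)) /\ U = \bigcap_(k in [set: 'I_n]) B k.
Proof.
move=> [m [j [C [_ FC ->]]]] AU.
exists (fun k => \bigcap_(l in [set l | j l = idx k]) C l); split.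
  by move=> k; apply: sigma_algebra_fin_bigcap => // l /= <-; exact: FC.
apply/seteqP; split=> [x Cx k _ l _|x Bx l _]; first exact: Cx.
have [[k jl]|no_k] := pselect (exists k, j l = idx k); first exact: Bx k Logic.I l jl.
rewrite (@superset_factor_setT (j l) (C l)) //; first by move=> k jk; apply: no_k; exists k.
by move=> y /AU; apply.
Qed.

End logical_independence.

Theorem mainTheorem3 (d : measure_display) (T : measurableType d) (I : Type)
  (F : I -> set (set T))
  (HF : sub_sigma_family F) (Hind : logically_independent F)
  (Aseq : nat -> set T) (n : nat -> nat)
  (idx : forall r, 'I_(n r) -> I) (As : forall r, 'I_(n r) -> set T)
  (Hn : forall r, (0 < n r)%N)
  (Hidx : forall r, injective (idx r))
  (HAs : forall r k, F (idx r k) (As r k) /\ nontrivial_set (As r k))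
  (HA : forall r, Aseq r = \bigcap_(k in [set: 'I_(n r)]) As r k)
  (HAnt : forall r, nontrivial_set (Aseq r))
  (Hunion : calA F (\bigcup_r Aseq r)) :
  forall r, exists B : 'I_(n r) -> set T,
    (forall k, F (idx r k) (B k) /\ (nontrivial_set (B k) \/ B k = setT)) /\
    \bigcup_r' Aseq r' = \bigcap_(k in [set: 'I_(n r)]) B k.
Proof.
move=> r.
have F_sigma i : sigma_algebra setT (F i) by have [] := HF i.
have AU : Aseq r `<=` \bigcup_r' Aseq r' by move=> x Ax; exists r.
have AsU : \bigcap_(k in [set: 'I_(n r)]) As r k `<=` \bigcup_r' Aseq r'.
  by rewrite -HA.
have [B [FB UB]] := calA_superset_factorize F_sigma Hind (Hidx r) (HAs r) Hunion AsU.
exists B; split=> // k; split; first exact: FB.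
apply: nonempty_nontrivial_or_setT.
have /eqP/set0P[x Ax] := (HAnt r).1.
by exists x; move: (AU x Ax); rewrite UB; apply.
Qed.
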